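(* Define \[ \omega(z;q):=\sum_{n=0}^{\infty} \frac{z^n q^{2n^2+2n}}{(q;q^2)_{n+1}\,(zq;q^2)_{n+1}}. \] Then, as formal power series in $q$ whose coefficients are polynomials in $z$ (equivalently, for $|q|<1$ and $|z|$ sufficiently small), \[ \omega(z;q)=\sum_{n=0}^{\infty} \frac{q^n}{(zq;q^2)_{n+1}}. \]
   Context: For $a$ and $q$, $(a;q)_0:=1$, $(a;q)_n:=(1-a)(1-aq)\cdots(1-aq^{n-1})$ for $n\ge1$. *)

From Stdlib Require Import Reals.
From Coquelicot Require Import Coquelicot.
Open Scope C_scope.

Fixpoint qpoch (a q : C) (n : nat) : C :=
  match n with
  | O => 1
  | S m => qpoch a q m * (1 - a * q ^ m)
  end.

Definition omega_term (z q : C) (n : nat) : C :=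
  z ^ n * q ^ (2 * n * n + 2 * n)
    / (qpoch q (q ^ 2) (S n) * qpoch (z * q) (q ^ 2) (S n)).

Definition rhs_term (z q : C) (n : nat) : C :=
  q ^ n / qpoch (z * q) (q ^ 2) (S n).

From Stdlib Require Import Reals Lra Psatz.
From Coquelicot Require Import Coquelicot.
Open Scope C_scope.

(* With p = q^2, both sides are 1/(1 - zq) times series built from Fine's function
   F(a, s) = \sum_n s^n / (a;p)_n at a = zq^3, s = q.  Comparing the terms of F(a, s)
   and s F(a, s) gives the functional equation
     F(a, s) = 1/(1 - s) + as/((1 - a)(1 - s)) F(ap, sp),
   and iterating it N times writes F(a, s) as the N-th partial sum of the omega series
   plus the remainder W_N F(ap^N, sp^N), where W_N is the product of the first N ratios.
   If |a p^j| <= r and |s p^j| <= m for all j with r + m < 1, then F is bounded along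
   all shifts and W_N decays geometrically, so the remainder tends to 0.  For the theorem
   r = |z| and m = |q|, which is why the radius is 1 - |q|. *)

Lemma Cmod_one_minus_ge (x : C) : (1 - Cmod x <= Cmod (1 - x))%R.
Proof.
  assert (H := Cmod_triangle (1 - x) x).
  replace (1 - x + x) with (RtoC 1) in H by ring.
  rewrite Cmod_1 in H. lra.
Qed.

Lemma one_minus_neq0 (x : C) : (Cmod x < 1)%R -> 1 - x <> 0.
Proof.
  intros Hx E. assert (H := Cmod_one_minus_ge x).
  rewrite E, Cmod_0 in H. lra.
Qed.

Lemma Cmult_neq0_l (x y : C) : x * y <> 0 -> x <> 0.
Proof. intros H E. apply H. rewrite E. ring. Qed.

Lemma Cmult_neq0_r (x y : C) : x * y <> 0 -> y <> 0.
Proof. intros H E. apply H. rewrite E. ring. Qed.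

Lemma qpoch_succ_shift (a p : C) (n : nat) :
  qpoch a p (S n) = (1 - a) * qpoch (a * p) p n.
Proof.
  revert a. induction n as [|n IH]; intros a.
  - simpl. ring.
  - change (qpoch a p (S (S n))) with (qpoch a p (S n) * (1 - a * p ^ S n)).
    rewrite IH. simpl. ring.
Qed.

Lemma is_series_C_unique (f : nat -> C) (l l' : C) :
  is_series f l -> is_series f l' -> l = l'.
Proof. exact (filterlim_locally_unique _ l l'). Qed.

Lemma is_series_Cmod_le_geom (f : nat -> C) (rho : R) (l : C) :
  (0 <= rho < 1)%R -> (forall n, Cmod (f n) <= rho ^ n)%R ->
  is_series f l -> (Cmod l <= / (1 - rho))%R.
Proof.
  intros Hrho Hf Hl.
  assert (Hgeom := is_series_geom rho ltac:(rewrite Rabs_pos_eq; lra)).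
  assert (Hnorm := filterlim_comp _ _ _ _ _ _ _ _ Hl (filterlim_norm (K := C_AbsRing) l)).
  apply (filterlim_le (F := eventually) (fun N => norm (sum_n f N)) (sum_n (pow rho))
           (norm l) (/ (1 - rho))%R); [|exact Hnorm|exact Hgeom].
  exists 0%nat. intros N _. unfold sum_n.
  eapply Rle_trans; [exact (norm_sum_n_m (V := C_NormedModule) f 0 N)|].
  apply sum_n_m_le. exact Hf.
Qed.

Lemma is_series_of_remainder_bound (f : nat -> C) (l : C) (B rho : R) :
  (0 <= rho < 1)%R -> (forall N, Cmod (l - sum_n f N) <= B * rho ^ N)%R ->
  is_series f l.
Proof.
  intros Hrho Hrem.
  apply (proj2 (filterlim_locally_ball_norm (sum_n f) l)). intros eps.
  assert (Hlim := is_lim_seq_scal_l _ B _ (is_lim_seq_geom rho ltac:(rewrite Rabs_pos_eq; lra))).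
  simpl in Hlim. rewrite Rmult_0_r in Hlim.
  apply is_lim_seq_spec in Hlim. destruct (Hlim eps) as [N0 HN0].
  exists N0. intros N HN. specialize (HN0 N HN). specialize (Hrem N).
  unfold ball_norm. change (Cmod (sum_n f N - l) < eps)%R.
  replace (sum_n f N - l) with (- (l - sum_n f N)) by ring. rewrite Cmod_opp.
  rewrite Rminus_0_r in HN0. apply Rabs_lt_between in HN0. lra.
Qed.

Section FineSeries.

Variable p : C.

Definition shift_bounded (x : C) (c : R) : Prop :=
  forall j : nat, (Cmod (x * p ^ j) <= c)%R.

Lemma shift_bounded_Cmod (x : C) (c : R) : shift_bounded x c -> (Cmod x <= c)%R.
Proof. intros Hx. specialize (Hx 0%nat). simpl in Hx. rewrite Cmult_1_r in Hx. exact Hx. Qed.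

Lemma shift_bounded_mul_pow (x : C) (c : R) (k : nat) :
  shift_bounded x c -> shift_bounded (x * p ^ k) c.
Proof.
  intros Hx j. rewrite <- Cmult_assoc, <- Cpow_add_r. apply Hx.
Qed.

Lemma shift_bounded_of_Cmod_le (x : C) (c : R) :
  (Cmod p <= 1)%R -> (Cmod x <= c)%R -> shift_bounded x c.
Proof.
  intros Hp Hx j. rewrite Cmod_mult, Cmod_pow.
  assert (Cmod p ^ j <= 1)%R
    by (rewrite <- (pow1 j); apply pow_incr; split; [apply Cmod_ge_0|exact Hp]).
  assert (0 <= Cmod p ^ j)%R by (apply pow_le, Cmod_ge_0).
  assert (0 <= Cmod x)%R by apply Cmod_ge_0. nra.
Qed.

Lemma qpoch_Cmod_lower (a : C) (c : R) (n : nat) :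
  (c < 1)%R -> shift_bounded a c -> ((1 - c) ^ n <= Cmod (qpoch a p n))%R.
Proof.
  intros Hc Ha. induction n as [|n IH]; simpl.
  - rewrite Cmod_1. lra.
  - rewrite Cmod_mult, Rmult_comm.
    assert (H1 := Cmod_one_minus_ge (a * p ^ n)). specialize (Ha n).
    assert (0 <= (1 - c) ^ n)%R by (apply pow_le; lra).
    apply Rmult_le_compat; lra.
Qed.

Lemma qpoch_neq0 (a : C) (c : R) (n : nat) :
  (c < 1)%R -> shift_bounded a c -> qpoch a p n <> 0.
Proof.
  intros Hc Ha E. assert (H := qpoch_Cmod_lower a c n Hc Ha).
  rewrite E, Cmod_0 in H. assert (0 < (1 - c) ^ n)%R by (apply pow_lt; lra). lra.
Qed.

Definition fine_term (a s : C) (n : nat) : C := s ^ n / qpoch a p n.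

Definition fine_ratio (a s : C) : C := a * s / ((1 - a) * (1 - s)).

Lemma fine_term_succ (a s : C) (n : nat) : qpoch a p (S n) <> 0 ->
  fine_term a s (S n) - s * fine_term a s n = a * s / (1 - a) * fine_term (a * p) (s * p) n.
Proof.
  intros Hnz. unfold fine_term.
  assert (Hshift := qpoch_succ_shift a p n).
  assert (Ha : 1 - a <> 0) by (rewrite Hshift in Hnz; exact (Cmult_neq0_l _ _ Hnz)).
  assert (Hap : qpoch (a * p) p n <> 0) by (rewrite Hshift in Hnz; exact (Cmult_neq0_r _ _ Hnz)).
  change (qpoch a p (S n)) with (qpoch a p n * (1 - a * p ^ n)) in Hnz, Hshift |- *.
  assert (Hn := Cmult_neq0_l _ _ Hnz). assert (Hn' := Cmult_neq0_r _ _ Hnz).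
  replace (qpoch (a * p) p n) with (qpoch a p n * (1 - a * p ^ n) / (1 - a))
    by (rewrite Hshift; field; exact Ha).
  rewrite Cpow_mult_l. simpl. field. repeat split; assumption.
Qed.

Lemma fine_functional_eq (a s L G : C) :
  (forall n, qpoch a p n <> 0) -> 1 - s <> 0 ->
  is_series (fine_term a s) L -> is_series (fine_term (a * p) (s * p)) G ->
  L = / (1 - s) + fine_ratio a s * G.
Proof.
  intros Hnz Hs HL HG.
  assert (Ha : 1 - a <> 0).
  { intros E. apply (Hnz 1%nat). simpl. rewrite Cmult_1_r, E. ring. }
  assert (Htail : is_series (fun n => fine_term a s (S n)) (L - 1)).
  { apply (is_series_incr_1 (V := C_NormedModule)).
    assert (E0 : @plus C_NormedModule (L - 1) (fine_term a s 0) = L)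
      by (unfold fine_term, plus; simpl; field).
    rewrite E0. exact HL. }
  assert (Hdiff := is_series_minus _ _ _ _ Htail (is_series_scal s _ _ HL)).
  assert (Hrhs := is_series_scal (a * s / (1 - a)) _ _ HG).
  assert (E : plus (L - 1) (opp (scal s L)) = scal (a * s / (1 - a)) G).
  { apply (is_series_C_unique _ _ _ Hdiff).
    apply (is_series_ext _ _ _ (fun n => eq_sym (fine_term_succ a s n (Hnz (S n))))).
    exact Hrhs. }
  change ((L - 1) - s * L = a * s / (1 - a) * G) in E.
  transitivity ((1 + ((L - 1) - s * L)) / (1 - s)); [field; exact Hs|].
  rewrite E. unfold fine_ratio. field. split; assumption.
Qed.

Fixpoint fine_weight (a s : C) (N : nat) : C :=
  match N with
  | O => 1
  | S N => fine_weight a s N * fine_ratio (a * p ^ N) (s * p ^ N)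
  end.

Definition fine_expansion_term (a s : C) (N : nat) : C :=
  fine_weight a s N / (1 - s * p ^ N).

Lemma fine_weight_closed (a s : C) (N : nat) :
  qpoch a p N <> 0 -> qpoch s p N <> 0 ->
  fine_weight a s N = a ^ N * s ^ N * p ^ (N * (N - 1)) / (qpoch a p N * qpoch s p N).
Proof.
  induction N as [|N IH]; intros Ha Hs.
  - simpl. field.
  - change (qpoch a p (S N)) with (qpoch a p N * (1 - a * p ^ N)) in Ha |- *.
    change (qpoch s p (S N)) with (qpoch s p N * (1 - s * p ^ N)) in Hs |- *.
    simpl fine_weight. rewrite (IH (Cmult_neq0_l _ _ Ha) (Cmult_neq0_l _ _ Hs)).
    replace (S N * (S N - 1))%nat with (N * (N - 1) + N + N)%nat by (destruct N; simpl; nia).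
    rewrite !Cpow_add_r. unfold fine_ratio. simpl. field.
    repeat split; eauto using Cmult_neq0_l, Cmult_neq0_r.
Qed.

Section Bounds.

Variables r m : R.
Hypotheses (r_ge0 : (0 <= r)%R) (m_ge0 : (0 <= m)%R) (rm_lt1 : (r + m < 1)%R).

Lemma fine_rate_bounds : (0 <= m / (1 - r) < 1)%R.
Proof.
  split; [apply Rdiv_le_0_compat; lra|].
  apply Rlt_div_l; lra.
Qed.

Lemma fine_ratio_rate_bounds : (0 <= r * m / ((1 - r) * (1 - m)) < 1)%R.
Proof.
  assert (0 < (1 - r) * (1 - m))%R by nra.
  split; [apply Rdiv_le_0_compat; nra|].
  apply Rlt_div_l; nra.
Qed.

Lemma fine_term_Cmod_le (a s : C) (n : nat) :
  shift_bounded a r -> shift_bounded s m ->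
  (Cmod (fine_term a s n) <= (m / (1 - r)) ^ n)%R.
Proof.
  intros Ha Hs. unfold fine_term.
  assert (Hlow := qpoch_Cmod_lower a r n ltac:(lra) Ha).
  assert (Hpos : (0 < (1 - r) ^ n)%R) by (apply pow_lt; lra).
  rewrite Cmod_div by (exact (qpoch_neq0 a r n ltac:(lra) Ha)).
  rewrite Cmod_pow. unfold Rdiv. rewrite Rpow_mult_distr, pow_inv.
  apply Rmult_le_compat.
  - apply pow_le, Cmod_ge_0.
  - left. apply Rinv_0_lt_compat. lra.
  - apply pow_incr. split; [apply Cmod_ge_0|exact (shift_bounded_Cmod s m Hs)].
  - apply Rinv_le_contravar; assumption.
Qed.

Lemma ex_series_fine (a s : C) :
  shift_bounded a r -> shift_bounded s m -> ex_series (fine_term a s).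
Proof.
  intros Ha Hs.
  apply (ex_series_le (V := C_CompleteNormedModule) _ (fun n => (m / (1 - r)) ^ n)%R).
  - intros n. exact (fine_term_Cmod_le a s n Ha Hs).
  - apply ex_series_geom. rewrite Rabs_pos_eq; apply fine_rate_bounds.
Qed.

Lemma fine_sum_Cmod_le (a s L : C) :
  shift_bounded a r -> shift_bounded s m -> is_series (fine_term a s) L ->
  (Cmod L <= / (1 - m / (1 - r)))%R.
Proof.
  intros Ha Hs HL. apply (is_series_Cmod_le_geom (fine_term a s)); [apply fine_rate_bounds| |exact HL].
  intros n. exact (fine_term_Cmod_le a s n Ha Hs).
Qed.

Lemma fine_ratio_Cmod_le (x y : C) : (Cmod x <= r)%R -> (Cmod y <= m)%R ->
  (Cmod (fine_ratio x y) <= r * m / ((1 - r) * (1 - m)))%R.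
Proof.
  intros Hx Hy.
  assert (Hx1 := Cmod_one_minus_ge x). assert (Hy1 := Cmod_one_minus_ge y).
  assert (0 <= Cmod x)%R by apply Cmod_ge_0. assert (0 <= Cmod y)%R by apply Cmod_ge_0.
  unfold fine_ratio.
  rewrite Cmod_div by (apply Cmult_neq_0; apply one_minus_neq0; lra).
  rewrite !Cmod_mult.
  apply Rmult_le_compat; [nra| |nra|].
  - left. apply Rinv_0_lt_compat. nra.
  - apply Rinv_le_contravar; nra.
Qed.

Lemma fine_weight_Cmod_le (a s : C) (N : nat) :
  shift_bounded a r -> shift_bounded s m ->
  (Cmod (fine_weight a s N) <= (r * m / ((1 - r) * (1 - m))) ^ N)%R.
Proof.
  intros Ha Hs. induction N as [|N IH]; simpl.
  - rewrite Cmod_1. lra.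
  - rewrite Cmod_mult, Rmult_comm.
    apply Rmult_le_compat; try apply Cmod_ge_0; [|exact IH].
    apply fine_ratio_Cmod_le; [apply Ha|apply Hs].
Qed.

Lemma fine_functional_eq_shift (a s L G : C) (N : nat) :
  shift_bounded a r -> shift_bounded s m ->
  is_series (fine_term (a * p ^ N) (s * p ^ N)) L ->
  is_series (fine_term (a * p ^ S N) (s * p ^ S N)) G ->
  L = / (1 - s * p ^ N) + fine_ratio (a * p ^ N) (s * p ^ N) * G.
Proof.
  intros Ha Hs HL HG.
  apply fine_functional_eq; [| |exact HL|].
  - intros n. exact (qpoch_neq0 _ r n ltac:(lra) (shift_bounded_mul_pow a r N Ha)).
  - apply one_minus_neq0. specialize (Hs N). lra.
  - replace (a * p ^ N * p) with (a * p ^ S N) by (simpl; ring).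
    replace (s * p ^ N * p) with (s * p ^ S N) by (simpl; ring).
    exact HG.
Qed.

Lemma fine_partial_sum (a s L L' : C) (N : nat) :
  shift_bounded a r -> shift_bounded s m -> is_series (fine_term a s) L ->
  is_series (fine_term (a * p ^ S N) (s * p ^ S N)) L' ->
  sum_n (fine_expansion_term a s) N + fine_weight a s (S N) * L' = L.
Proof.
  intros Ha Hs HL. revert L'. induction N as [|N IH]; intros L' HL'.
  - rewrite sum_O.
    assert (HL0 : is_series (fine_term (a * p ^ 0) (s * p ^ 0)) L)
      by (simpl; rewrite !Cmult_1_r; exact HL).
    rewrite (fine_functional_eq_shift a s L L' 0 Ha Hs HL0 HL').
    assert (Hs1 : 1 - s <> 0)
      by (apply one_minus_neq0; assert (H := shift_bounded_Cmod s m Hs); lra).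
    unfold fine_expansion_term. simpl. field. exact Hs1.
  - destruct (ex_series_fine (a * p ^ S N) (s * p ^ S N)
                (shift_bounded_mul_pow a r _ Ha) (shift_bounded_mul_pow s m _ Hs)) as [M HM].
    rewrite <- (IH M HM), sum_Sn, (fine_functional_eq_shift a s M L' (S N) Ha Hs HM HL').
    change (fine_weight a s (S (S N)))
      with (fine_weight a s (S N) * fine_ratio (a * p ^ S N) (s * p ^ S N)).
    assert (HsN : 1 - s * p ^ S N <> 0) by (apply one_minus_neq0; specialize (Hs (S N)); lra).
    unfold fine_expansion_term, plus. simpl. field. exact HsN.
Qed.

Lemma is_series_fine_expansion (a s L : C) :
  shift_bounded a r -> shift_bounded s m -> is_series (fine_term a s) L ->
  is_series (fine_expansion_term a s) L.
Proof.
  intros Ha Hs HL.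
  assert (Htheta := fine_ratio_rate_bounds).
  set (theta := (r * m / ((1 - r) * (1 - m)))%R) in *.
  apply (is_series_of_remainder_bound _ _ (/ (1 - m / (1 - r))) theta Htheta).
  intros N.
  destruct (ex_series_fine (a * p ^ S N) (s * p ^ S N)
              (shift_bounded_mul_pow a r _ Ha) (shift_bounded_mul_pow s m _ Hs)) as [L' HL'].
  rewrite <- (fine_partial_sum a s L L' N Ha Hs HL HL').
  replace (sum_n (fine_expansion_term a s) N + fine_weight a s (S N) * L'
           - sum_n (fine_expansion_term a s) N) with (fine_weight a s (S N) * L') by ring.
  rewrite Cmod_mult, Rmult_comm.
  apply Rmult_le_compat; try apply Cmod_ge_0.
  - exact (fine_sum_Cmod_le _ _ L' (shift_bounded_mul_pow a r _ Ha)
             (shift_bounded_mul_pow s m _ Hs) HL').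
  - eapply Rle_trans; [exact (fine_weight_Cmod_le a s (S N) Ha Hs)|].
    fold theta. simpl. assert (0 <= theta ^ N)%R by (apply pow_le; lra). nra.
Qed.

End Bounds.

End FineSeries.

Lemma rhs_term_as_fine (z q : C) (n : nat) :
  1 - z * q <> 0 -> qpoch (z * q * q ^ 2) (q ^ 2) n <> 0 ->
  rhs_term z q n = / (1 - z * q) * fine_term (q ^ 2) (z * q * q ^ 2) q n.
Proof.
  intros Hzq Ha. unfold rhs_term, fine_term.
  rewrite qpoch_succ_shift. field. split; assumption.
Qed.

Lemma omega_term_as_fine (z q : C) (n : nat) :
  1 - z * q <> 0 -> qpoch (z * q * q ^ 2) (q ^ 2) n <> 0 -> qpoch q (q ^ 2) (S n) <> 0 ->
  omega_term z q n = / (1 - z * q) * fine_expansion_term (q ^ 2) (z * q * q ^ 2) q n.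
Proof.
  intros Hzq Ha Hq. unfold omega_term, fine_expansion_term.
  change (qpoch q (q ^ 2) (S n)) with (qpoch q (q ^ 2) n * (1 - q * (q ^ 2) ^ n)) in Hq |- *.
  assert (Hq0 := Cmult_neq0_l _ _ Hq). assert (Hqn := Cmult_neq0_r _ _ Hq).
  rewrite (fine_weight_closed _ _ _ _ Ha Hq0), qpoch_succ_shift.
  rewrite !Cpow_mult_l, <- !Cpow_mult_r in *.
  replace (2 * n * n + 2 * n)%nat with (n + 2 * n + n + 2 * (n * (n - 1)))%nat
    by (destruct n; simpl; nia).
  rewrite !Cpow_add_r. field. repeat split; assumption.
Qed.

Theorem theorem2p1 :
  forall q : C, (Cmod q < 1)%R ->
  exists r : R, (0 < r)%R /\
    forall z : C, (Cmod z < r)%R ->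
      exists l : C, is_series (omega_term z q) l /\ is_series (rhs_term z q) l.
Proof.
  intros q Hq. exists (1 - Cmod q)%R. split; [lra|]. intros z Hz.
  assert (Hq0 := Cmod_ge_0 q). assert (Hz0 := Cmod_ge_0 z).
  assert (Hp : (Cmod (q ^ 2) <= 1)%R) by (rewrite Cmod_pow; simpl; nra).
  assert (Ha : shift_bounded (q ^ 2) (z * q * q ^ 2) (Cmod z)).
  { apply shift_bounded_of_Cmod_le; [exact Hp|].
    assert (Hp0 := Cmod_ge_0 (q ^ 2)).
    assert (Cmod q * Cmod (q ^ 2) <= 1)%R by nra.
    rewrite !Cmod_mult. nra. }
  assert (Hs : shift_bounded (q ^ 2) q (Cmod q))
    by (apply shift_bounded_of_Cmod_le; [exact Hp|lra]).
  assert (Hzq : 1 - z * q <> 0) by (apply one_minus_neq0; rewrite Cmod_mult; nra).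
  assert (Hna := fun n => qpoch_neq0 _ _ (Cmod z) n ltac:(lra) Ha).
  assert (Hns := fun n => qpoch_neq0 _ _ (Cmod q) n Hq Hs).
  assert (Hrm : (Cmod z + Cmod q < 1)%R) by lra.
  destruct (ex_series_fine _ _ _ Hq0 Hrm _ _ Ha Hs) as [L HL].
  exists (/ (1 - z * q) * L). split.
  - apply (is_series_ext _ _ _ (fun n => eq_sym (omega_term_as_fine z q n Hzq (Hna n) (Hns (S n))))).
    apply (is_series_scal (V := C_NormedModule)).
    exact (is_series_fine_expansion _ _ _ Hz0 Hq0 Hrm _ _ _ Ha Hs HL).
  - apply (is_series_ext _ _ _ (fun n => eq_sym (rhs_term_as_fine z q n Hzq (Hna n)))).
    exact (is_series_scal (V := C_NormedModule) _ _ _ HL).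
Qed.
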